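(* Let $K\subseteq\mathbb{R}^n$ be a proper cone and let $A\in\mathbb{R}^{n\times n}$ be $K$-monotone. Let $A=U-V$ be a $K$-regular splitting and let $U=F-G$ be a $K$-weak regular splitting of type II such that $VF^{-1}G=GF^{-1}V$. Fix a positive integer $s$, let $P_s$ be the matrix with $P_s^{-1}=\sum_{j=0}^{s-1}(F^{-1}G)^{j}F^{-1}$, and let $\widehat{T}_{s}=(GF^{-1})^{s}+\sum_{j=0}^{s-1}(GF^{-1})^{j}VF^{-1}$. If $G\geq_K GF^{-1}G$, then the induced splitting $A=P_s-\widehat{T}_sP_s$ is a $K$-regular splitting.
   Context: A proper cone $K\subseteq\mathbb{R}^n$ is a closed, convex, pointed, solid cone. For $M\in\mathbb{R}^{n\times n}$, $M\geq_K 0$ means $MK\subseteq K$, and $M\geq_K N$ means $M-N\geq_K0$. A matrix $A$ is $K$-monotone if $A$ is nonsingular and $A^{-1}\geq_K 0$. A splitting $A=U-V$ (with $U$ nonsingular) is $K$-regular if $U^{-1}\geq_K 0$ and $V\geq_K 0$; it is a $K$-weak regular splitting of type II if $U^{-1}\geq_K 0$ and $VU^{-1}\geq_K 0$. *)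

From HB Require Import structures.
From mathcomp Require Import all_boot all_order all_algebra.
From mathcomp Require Import all_classical all_reals all_analysis.
Set Implicit Arguments. Unset Strict Implicit. Unset Printing Implicit Defensive.
Import Order.TTheory GRing.Theory Num.Theory.
Import numFieldNormedType.Exports.
Local Open Scope classical_set_scope.
Local Open Scope ring_scope.

Definition is_cone (R : realType) (n : nat) (K : set 'cV[R]_n) : Prop :=
  forall (a : R) (x : 'cV[R]_n), 0 <= a -> K x -> K (a *: x).

Definition is_convex_set (R : realType) (n : nat) (K : set 'cV[R]_n) : Prop :=
  forall (t : R) (x y : 'cV[R]_n), 0 <= t <= 1 -> K x -> K y ->
    K (t *: x + (1 - t) *: y).

Definition is_pointed (R : realType) (n : nat) (K : set 'cV[R]_n) : Prop :=
  forall x : 'cV[R]_n, K x -> K (- x) -> x = 0.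

Definition is_solid (R : realType) (n : nat) (K : set 'cV[R]_n) : Prop :=
  (interior K) !=set0.

Definition proper_cone (R : realType) (n : nat) (K : set 'cV[R]_n) : Prop :=
  [/\ is_cone K, closed K, is_convex_set K, is_pointed K & is_solid K].

Definition Knonneg (R : realType) (n : nat) (K : set 'cV[R]_n) (M : 'M[R]_n) : Prop :=
  forall x : 'cV[R]_n, K x -> K (M *m x).

Definition Kge (R : realType) (n : nat) (K : set 'cV[R]_n) (M N : 'M[R]_n) : Prop :=
  Knonneg K (M - N).

Definition K_monotone (R : realType) (n : nat) (K : set 'cV[R]_n) (A : 'M[R]_n) : Prop :=
  A \in unitmx /\ Knonneg K (invmx A).

Definition K_regular_splitting (R : realType) (n : nat) (K : set 'cV[R]_n)
  (A U V : 'M[R]_n) : Prop :=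
  [/\ A = U - V, U \in unitmx, Knonneg K (invmx U) & Knonneg K V].

Definition K_weak_regular_splitting_II (R : realType) (n : nat) (K : set 'cV[R]_n)
  (A U V : 'M[R]_n) : Prop :=
  [/\ A = U - V, U \in unitmx, Knonneg K (invmx U) & Knonneg K (V *m invmx U)].

Definition Ps_inv (R : realType) (n : nat) (F G : 'M[R]_n) (s : nat) : 'M[R]_n :=
  \sum_(j < s) (iter j (mulmx (invmx F *m G)) 1%:M) *m invmx F.

Definition Ps (R : realType) (n : nat) (F G : 'M[R]_n) (s : nat) : 'M[R]_n :=
  invmx (Ps_inv F G s).

Definition That (R : realType) (n : nat) (F G V : 'M[R]_n) (s : nat) : 'M[R]_n :=
  iter s (mulmx (G *m invmx F)) 1%:M
  + \sum_(j < s) (iter j (mulmx (G *m invmx F)) 1%:M) *m V *m invmx F.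

(* Write H = G F^-1, W = F^-1 G and D = G - G F^-1 G, so that D = H U = U W.
   Since P_s^-1 = F^-1 (1 + H + ... + H^(s-1)), we get (1 - H^s) P_s = U, and the
   commutation hypothesis gives T_s P_s = H^s P_s + V; hence A = P_s - T_s P_s
   with P_s^-1 >=_K 0.  Moreover W = U^-1 D >=_K 0 and
   H^s P_s = H^(s-1) D X with X = U^-1 P_s, so everything reduces to X >=_K 0.
   Now X = 1 + W^s X, and for an interior point e of K the vector u = U^-1 e
   dominates every vector and satisfies W u <=_K lam u for some lam < 1.
   Iterating the fixed-point equation shows X x + eps u in K for arbitrarily
   small eps > 0 whenever x is in K; closedness of K concludes.  This is a
   Neumann-series argument in the cone order, with no spectral theory. *)

From HB Require Import structures.
From mathcomp Require Import all_boot all_order all_algebra.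
From mathcomp Require Import all_classical all_reals all_analysis.
Set Implicit Arguments. Unset Strict Implicit. Unset Printing Implicit Defensive.
Import Order.TTheory GRing.Theory Num.Theory.
Import numFieldNormedType.Exports.
Local Open Scope classical_set_scope.
Local Open Scope ring_scope.

Section MatrixPower.
Variables (R : pzRingType) (n : nat).
Implicit Types X Y Z : 'M[R]_n.

Definition mxpow X k : 'M[R]_n := iter k (mulmx X) 1%:M.

Lemma mxpowS X k : mxpow X k.+1 = X *m mxpow X k.
Proof. by []. Qed.

Lemma mxpow_intertwine X Y Z k :
  X *m Z = Z *m Y -> mxpow X k *m Z = Z *m mxpow Y k.
Proof.
move=> XZ; elim: k => [|k IHk]; first by rewrite mul1mx mulmx1.
by rewrite !mxpowS -mulmxA IHk !mulmxA XZ.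
Qed.

Lemma mxpowSr X k : mxpow X k.+1 = mxpow X k *m X.
Proof. by rewrite mxpowS (mxpow_intertwine k (erefl (X *m X))). Qed.

Lemma mulmx_sub1_sum_mxpow X k :
  (1%:M - X) *m \sum_(j < k) mxpow X j = 1%:M - mxpow X k.
Proof.
elim: k => [|k IHk]; first by rewrite big_ord0 mulmx0 subrr.
by rewrite big_ord_recr /= mulmxDr IHk mulmxBl mul1mx -mxpowS addrA subrK.
Qed.

End MatrixPower.

Section ConeOrder.
Variables (R : realType) (n : nat) (K : set 'cV[R]_n).
Hypotheses (Kcone : is_cone K) (Kconvex : is_convex_set K).

Lemma coneD x y : K x -> K y -> K (x + y).
Proof.
move=> Kx Ky; have half01 : 0 <= (2^-1 : R) <= 1.
  by rewrite invr_ge0 ler0n invf_le1 ?ler1n.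
have -> : x + y = 2 *: (2^-1 *: x + (1 - 2^-1) *: y).
  have -> : 1 - 2^-1 = 2^-1 :> R by rewrite {1}(splitr 1) mul1r addrK.
  by rewrite -scalerDr scalerA divff ?pnatr_eq0 ?scale1r.
by apply: Kcone; [|exact: Kconvex].
Qed.

Lemma Knonneg_mul (M N : 'M[R]_n) :
  Knonneg K M -> Knonneg K N -> Knonneg K (M *m N).
Proof. by move=> KM KN x Kx; rewrite -mulmxA; apply/KM/KN. Qed.

Lemma Knonneg1 : Knonneg K 1%:M.
Proof. by move=> x; rewrite mul1mx. Qed.

Lemma Knonneg_mxpow (M : 'M[R]_n) k : Knonneg K M -> Knonneg K (mxpow M k).
Proof.
move=> KM; elim: k => [|k IHk]; first exact: Knonneg1.
by rewrite mxpowS; apply: Knonneg_mul.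
Qed.

Lemma Knonneg_add (M N : 'M[R]_n) :
  Knonneg K M -> Knonneg K N -> Knonneg K (M + N).
Proof. by move=> KM KN x Kx; rewrite mulmxDl; apply: coneD; [apply: KM|apply: KN]. Qed.

Lemma Knonneg_sum (I : Type) (r : seq I) (P : pred I) (M : I -> 'M[R]_n) :
  (forall i, P i -> Knonneg K (M i)) -> Knonneg K (\sum_(i <- r | P i) M i).
Proof.
move=> KM; apply: big_ind => //; last exact: Knonneg_add.
by move=> x Kx; rewrite mul0mx -(scale0r x); apply: Kcone.
Qed.

Definition order_unit (u : 'cV[R]_n) :=
  forall v, exists2 c : R, 0 <= c & K (c *: u - v).

Lemma interior_order_unit e : (interior K) e -> order_unit e.
Proof.
move=> /nbhs_ballP[rho rho_gt0 ballK] v.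
set c := `|v| / rho + 1; have c_gt0 : 0 < c by rewrite /c ltr_wpDl // divr_ge0 // ltW.
exists c; first exact: ltW.
have -> : c *: e - v = c *: (e - c^-1 *: v).
  by rewrite scalerBr scalerA divff ?gt_eqF ?scale1r.
apply: Kcone; first exact: ltW.
apply: ballK; rewrite -ball_normE /ball_ /= subKr normrZ gtr0_norm ?invr_gt0 //.
by rewrite ltr_pdivrMl // /c mulrDl divfK ?gt_eqF // mul1r ltrDl.
Qed.

Lemma order_unit_mulmx (M : 'M[R]_n) u :
  M \in unitmx -> Knonneg K M -> order_unit u -> order_unit (M *m u).
Proof.
move=> Mu KM Ku v; have [c c_ge0 Kc] := Ku (invmx M *m v); exists c => //.
have -> : c *: (M *m u) - v = M *m (c *: u - invmx M *m v).
  by rewrite mulmxBr -scalemxAr mulmxA mulmxV // mul1mx.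
exact: KM.
Qed.

Lemma contraction_mxpow (M : 'M[R]_n) u lam :
  Knonneg K M -> 0 <= lam -> K (lam *: u - M *m u) ->
  forall k, K (lam ^+ k *: u - mxpow M k *m u).
Proof.
move=> KM lam_ge0 Klam; elim=> [|k IHk].
  by rewrite expr0 scale1r mul1mx subrr -(scale0r (lam *: u - M *m u)); apply: Kcone.
have -> : lam ^+ k.+1 *: u - mxpow M k.+1 *m u =
    lam *: (lam ^+ k *: u - mxpow M k *m u) + mxpow M k *m (lam *: u - M *m u).
  by rewrite mulmxBr -scalemxAr mulmxA -mxpowSr scalerBr scalerA -exprS addrA subrK.
by apply: coneD; [apply: Kcone | apply: Knonneg_mxpow].
Qed.

Lemma Knonneg_fixpoint (M Z X : 'M[R]_n) u lam :
  closed K -> Knonneg K M -> Knonneg K Z -> order_unit u ->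
  0 <= lam < 1 -> K (lam *: u - M *m u) -> X = Z + M *m X -> Knonneg K X.
Proof.
move=> Kclosed KM KZ Ku /andP[lam_ge0 lam_lt1] Klam XE x Kx; set z := X *m x.
have Zx : Z *m x = z - M *m z by rewrite /z {1}XE mulmxDl -mulmxA addrK.
have Kpartial k : K (z - mxpow M k *m z).
  elim: k => [|k IHk]; first by rewrite mul1mx subrr -(scale0r x); apply: Kcone.
  have -> : z - mxpow M k.+1 *m z = (z - mxpow M k *m z) + mxpow M k *m (Z *m x).
    by rewrite Zx mulmxBr (mulmxA (mxpow M k) M) -mxpowSr addrA subrK.
  by apply: coneD => //; apply: Knonneg_mxpow => //; apply: KZ.
have [a a_ge0 Ka] := Ku (- z).
have Kapprox k : K (z + lam ^+ k *: (a *: u)).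
  have -> : z + lam ^+ k *: (a *: u) = (z - mxpow M k *m z)
      + mxpow M k *m (a *: u - - z) + a *: (lam ^+ k *: u - mxpow M k *m u).
    rewrite opprK mulmxDr -scalemxAr scalerBr !scalerA mulrC.
    by rewrite [a *: _ + _]addrC (addrA (z - _)) subrK -addrA (addrC (a *: _)) subrK.
  apply: coneD; last by apply: Kcone => //; exact: contraction_mxpow.
  by apply: coneD => //; apply: Knonneg_mxpow.
have z_lim : (fun k => z + lam ^+ k *: (a *: u)) @ \oo --> z.
  rewrite -[X in _ --> X]addr0 -(scale0r (a *: u)).
  apply: cvgD; first exact: cvg_cst.
  by apply: cvgZr_tmp; apply: cvg_expr; rewrite ger0_norm.
by apply: (closed_cvg _ Kclosed _ _ z_lim); apply: nearW.
Qed.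

Lemma splitting_contraction (F G : 'M[R]_n) e :
  F \in unitmx -> F - G \in unitmx -> Knonneg K (invmx F) ->
  order_unit e -> K e ->
  exists2 lam : R, 0 <= lam < 1 & K (lam *: (invmx (F - G) *m e)
                                     - invmx F *m G *m (invmx (F - G) *m e)).
Proof.
move=> Fu Uu KFi Ke_unit Ke; set u := invmx (F - G) *m e.
have u_step : u - invmx F *m G *m u = invmx F *m e.
  have -> : u - invmx F *m G *m u = invmx F *m ((F - G) *m u).
    by rewrite mulmxBl mulmxBr !mulmxA mulVmx // mul1mx.
  by rewrite /u (mulmxA (F - G)) mulmxV // mul1mx.
have [c c_ge0 Kc] := Ke_unit (F *m u).
have c1_gt0 : 0 < c + 1 by rewrite ltr_wpDl.
have Kc1 : K ((c + 1) *: (invmx F *m e) - u).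
  have -> : (c + 1) *: (invmx F *m e) - u = invmx F *m ((c *: e - F *m u) + e).
    by rewrite mulmxDr mulmxBr -scalemxAr mulmxA mulVmx // mul1mx scalerDl scale1r addrAC.
  by apply: KFi; apply: coneD.
exists (1 - (c + 1)^-1).
  by rewrite subr_ge0 invf_le1 // lerDr c_ge0 ltrBlDr ltrDl invr_gt0.
have -> : (1 - (c + 1)^-1) *: u - invmx F *m G *m u
    = (c + 1)^-1 *: ((c + 1) *: (invmx F *m e) - u).
  by rewrite scalerBr scalerA mulVf ?gt_eqF // scale1r -u_step scalerBl scale1r addrAC.
by apply: Kcone; rewrite ?invr_ge0 ?ltW.
Qed.

End ConeOrder.

Section InducedSplitting.
Variables (R : realType) (n : nat) (F G : 'M[R]_n) (s : nat).
Hypotheses (Fu : F \in unitmx) (Pu : Ps_inv F G s \in unitmx).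

Lemma Ps_invE : Ps_inv F G s = invmx F *m \sum_(j < s) mxpow (G *m invmx F) j.
Proof.
rewrite mulmx_sumr; apply: eq_bigr => j _.
exact: (mxpow_intertwine j (esym (mulmxA _ _ _))).
Qed.

Lemma sub_mxpow_mulmx_Ps :
  (1%:M - mxpow (G *m invmx F) s) *m Ps F G s = F - G.
Proof.
rewrite -mulmx_sub1_sum_mxpow.
have -> : 1%:M - G *m invmx F = (F - G) *m invmx F by rewrite mulmxBl mulmxV.
by rewrite -(mulmxA (F - G)) -Ps_invE -mulmxA mulmxV // mulmx1.
Qed.

Lemma That_mulmx_Ps V : V *m invmx F *m G = G *m invmx F *m V ->
  That F G V s *m Ps F G s = mxpow (G *m invmx F) s *m Ps F G s + V.
Proof.
move=> VFG; rewrite mulmxDl; congr (_ + _).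
have comm : G *m invmx F *m (V *m invmx F) = V *m invmx F *m (G *m invmx F).
  by rewrite !mulmxA VFG.
rewrite -!mulmx_suml -(mulmxA _ V) mulmx_suml.
under eq_bigr => j _ do rewrite (mxpow_intertwine j comm).
by rewrite -mulmx_sumr -!mulmxA (mulmxA (invmx F)) -Ps_invE mulmxV // mulmx1.
Qed.

Lemma mulmx_GFi_sub : G *m invmx F *m (F - G) = G - G *m invmx F *m G.
Proof. by rewrite mulmxBr -(mulmxA G _ F) mulVmx // mulmx1. Qed.

Lemma mulmx_sub_FiG : (F - G) *m (invmx F *m G) = G - G *m invmx F *m G.
Proof. by rewrite mulmxBl mulmxA mulmxV // mul1mx mulmxA. Qed.

Hypothesis Uu : F - G \in unitmx.

Lemma mxpow_mulmx_Ps : (0 < s)%N -> mxpow (G *m invmx F) s *m Ps F G s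
  = mxpow (G *m invmx F) s.-1 *m (G - G *m invmx F *m G)
    *m (invmx (F - G) *m Ps F G s).
Proof.
case: s => // k _; rewrite -mulmx_GFi_sub mxpowSr.
by rewrite !mulmxA -(mulmxA _ (F - G)) mulmxV // mulmx1.
Qed.

Lemma invmx_sub_mulmx_Ps_fixpoint : invmx (F - G) *m Ps F G s
  = 1%:M + mxpow (invmx F *m G) s *m (invmx (F - G) *m Ps F G s).
Proof.
have intertwine : invmx F *m G *m invmx (F - G) = invmx (F - G) *m (G *m invmx F).
  apply: (canRL (mulKmx Uu)); rewrite !mulmxA -(mulmxA (F - G)) mulmx_sub_FiG.
  by rewrite -mulmx_GFi_sub -(mulmxA (G *m _)) mulmxV // mulmx1.
rewrite mulmxA (mxpow_intertwine s intertwine) -mulmxA.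
apply/eqP; rewrite -subr_eq -mulmxBr -{1}[Ps F G s]mul1mx -mulmxBl.
by rewrite sub_mxpow_mulmx_Ps mulVmx.
Qed.

End InducedSplitting.

Unset Implicit Arguments.

Theorem theorem3p7 (R : realType) (n : nat) (K : set 'cV[R]_n)
  (A U V F G : 'M[R]_n) (s : nat) :
  proper_cone K ->
  K_monotone K A ->
  K_regular_splitting K A U V ->
  K_weak_regular_splitting_II K U F G ->
  V *m invmx F *m G = G *m invmx F *m V ->
  (0 < s)%N ->
  Ps_inv F G s \in unitmx ->
  Kge K G (G *m invmx F *m G) ->
  K_regular_splitting K A (Ps F G s) (That F G V s *m Ps F G s).
Proof.
move=> [Kcone Kclosed Kconvex _ [e e_int]] _ [-> Uu KUi KV] [UFG Fu KFi KH]
  VFG s_gt0 Pu KD; subst U.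
have KW : Knonneg K (invmx F *m G).
  by rewrite -[X in Knonneg K X](mulKmx Uu) mulmx_sub_FiG //; apply: Knonneg_mul.
have e_unit := interior_order_unit Kcone e_int.
have [lam /andP[lam_ge0 lam_lt1] Klam] :=
  splitting_contraction Kcone Kconvex Fu Uu KFi e_unit (interior_subset e_int).
have KX : Knonneg K (invmx (F - G) *m Ps F G s).
  apply: (Knonneg_fixpoint Kcone Kconvex Kclosed (Knonneg_mxpow s KW) (Z := 1%:M) _
    (order_unit_mulmx _ KUi e_unit) _
    (contraction_mxpow Kcone Kconvex KW lam_ge0 Klam s)).
  - exact: Knonneg1.
  - by rewrite unitmx_inv.
  - by rewrite exprn_ge0 // exprn_ilt1 // -lt0n.
  - exact: invmx_sub_mulmx_Ps_fixpoint.
split.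
- rewrite That_mulmx_Ps // opprD addrA -{1}[Ps F G s]mul1mx -mulmxBl.
  by rewrite sub_mxpow_mulmx_Ps.
- by rewrite unitmx_inv.
- rewrite invmxK Ps_invE; apply: Knonneg_mul => //.
  by apply: Knonneg_sum => // j _; apply: Knonneg_mxpow.
- rewrite That_mulmx_Ps // mxpow_mulmx_Ps //.
  by apply: Knonneg_add => //; do 2?apply: Knonneg_mul => //; apply: Knonneg_mxpow.
Qed.
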